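(* Let $(Q(M))_{M\in\mathcal N}$ be a family of matrices satisfying (A1)–(A3), and let $p$ be a stochastic choice function such that $p(\cdot,\{i,j\})\bigl(I-Q(\{i,j\})\bigr)=0$ for all distinct $i,j\in X$. Then for a menu $M\in\mathcal N$ we have $p(\cdot,M)\bigl(I-Q(M)\bigr)=0$ if and only if for every $j\in M$ $$\sum_{\substack{i\in M\setminus\{j\}:\\ q_{ji}(M)>0}}\frac{\delta_{ji}(M)\,q_{ji}(M)}{p(i,\{i,j\})}\;-\sum_{\substack{i\in M\setminus\{j\}:\\ q_{ji}(M)=0,\ q_{ji}(\{i,j\})=0}}\frac{\delta_{ij}(M)\,q_{ij}(M)}{p(j,\{i,j\})}=0$$ (all denominators appearing here are strictly positive).
   Context: $X$ is a finite set of alternatives; a menu is a nonempty subset of $X$, and $\mathcal N$ denotes the set of all menus. A stochastic choice function is a map $p:X\times\mathcal N\to[0,1]$ with $\sum_{i\in M}p(i,M)=1$ and $p(i,M)=0$ for $i\notin M$; $p(\cdot,M)$ denotes the row vector $(p(i,M))_{i\in M}$. For $M\in\mathcal N$ and $i,j\in M$ let $\delta_{ij}(M)=p(i,M)\,p(j,\{i,j\})-p(i,\{i,j\})\,p(j,M)$. The family $Q(M)=(q_{ij}(M))_{i,j\in M}$, $M\in\mathcal N$, has nonnegative entries and satisfies for all $M\in\mathcal N$ and distinct $i,j\in M$: (A1) $q_{ii}(M)=1-\sum_{k\neq i}q_{ik}(M)>0$; (A2) if $q_{ij}(\{i,j\})=0$ then $q_{ji}(\{i,j\})>0$; (A3)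 $q_{ij}(\{i,j\})\,q_{ji}(M)=q_{ji}(\{i,j\})\,q_{ij}(M)$. *)

From mathcomp Require Import all_boot all_order all_algebra.
Set Implicit Arguments. Unset Strict Implicit. Unset Printing Implicit Defensive.
Import Order.TTheory GRing.Theory Num.Theory.
Local Open Scope ring_scope.

(* X is a finType; menus are nonempty {set X}; p i M = p(i,M);
   Q M i j = q_ij(M). *)

Definition is_scf (R : realFieldType) (X : finType) (p : X -> {set X} -> R) : Prop :=
  forall M : {set X}, M != set0 ->
    (forall i, 0 <= p i M <= 1) /\
    (\sum_(i in M) p i M = 1) /\
    (forall i, i \notin M -> p i M = 0).

Definition delta (R : realFieldType) (X : finType) (p : X -> {set X} -> R)
  (M : {set X}) (i j : X) : R :=
  p i M * p j [set i; j] - p i [set i; j] * p j M.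

(* p(.,M)(I - Q(M)) = 0, written entrywise: for every column k in M,
   sum_{l in M} p(l,M) ((I)_{lk} - q_lk(M)) = 0. *)
Definition stationary (R : realFieldType) (X : finType) (p : X -> {set X} -> R)
  (Q : {set X} -> X -> X -> R) (M : {set X}) : Prop :=
  forall k, k \in M ->
    \sum_(l in M) p l M * ((l == k)%:R - Q M l k) = 0.

(* Assumptions (A1)-(A3) plus nonnegativity *)
Definition Q_assumptions (R : realFieldType) (X : finType)
  (Q : {set X} -> X -> X -> R) : Prop :=
  (forall M : {set X}, M != set0 -> forall i j, i \in M -> j \in M -> 0 <= Q M i j) /\
  (forall M : {set X}, M != set0 -> forall i, i \in M ->
      Q M i i = 1 - \sum_(k in M | k != i) Q M i k /\ 0 < Q M i i) /\
  (forall i j : X, i != j -> Q [set i; j] i j = 0 -> 0 < Q [set i; j] j i) /\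
  (forall M : {set X}, M != set0 -> forall i j, i \in M -> j \in M -> i != j ->
      Q [set i; j] i j * Q M j i = Q [set i; j] j i * Q M i j).

(* Using (A1), the stationarity equation at column j says that the net flux
   sum_{i <> j} (p(j,M) q_ji(M) - p(i,M) q_ij(M)) vanishes.  The criterion is the
   same sum written term by term: by detailed balance on the pair menu {i,j}
   and (A3), each flux term equals the corresponding summand of the criterion. *)

From mathcomp Require Import all_boot all_order all_algebra.
From mathcomp Require Import ring.
Set Implicit Arguments. Unset Strict Implicit. Unset Printing Implicit Defensive.
Import Order.TTheory GRing.Theory Num.Theory.
Local Open Scope ring_scope.

(* Here [x, y] = p(i,{i,j}), p(j,{i,j}); [a, b] = p(i,M), p(j,M);
   [u, v] = q_ij(M), q_ji(M); [s, t] = q_ij({i,j}), q_ji({i,j}). *)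
Lemma pair_flux_identity (R : realFieldType) (a b x y u v s t : R) :
  x + y = 1 -> y * t = x * s -> s * v = t * u -> (t = 0 -> 0 < s) -> 0 <= v ->
  (if 0 < v then (b * x - y * a) * v / x else 0)
  - (if (v == 0) && (t == 0) then (a * y - x * b) * u / y else 0)
  = b * v - a * u.
Proof.
move=> xy1 balance A3 A2 v_ge0.
have [v_gt0|v_le0] := ltrP 0 v.
  rewrite (gt_eqF v_gt0) /= subr0.
  have t_neq0 : t != 0.
    apply/eqP => t0; move/eqP: A3; rewrite t0 mul0r mulf_eq0.
    by rewrite (gt_eqF (A2 t0)) (gt_eqF v_gt0).
  have x_neq0 : x != 0.
    apply/eqP => x0; move/eqP: balance; rewrite x0 mul0r mulf_eq0 (negbTE t_neq0).
    by rewrite orbF => /eqP y0; move: xy1; rewrite x0 y0 addr0 => /eqP; rewrite eq_sym oner_eq0.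
  have cross_balance : y * v = x * u.
    apply: (mulIf t_neq0); rewrite mulrAC balance -mulrA A3; ring.
  have -> : (b * x - y * a) * v = (b * v - a * u) * x.
    transitivity (b * v * x - a * (y * v)); first ring.
    by rewrite cross_balance; ring.
  by rewrite mulfK.
have v0 : v = 0 by apply/eqP; rewrite eq_le v_le0 v_ge0.
rewrite v0 eqxx /= in A3 *.
have [t0|t_neq0] := eqVneq t 0.
  have x0 : x = 0.
    by apply/eqP; move/eqP: balance; rewrite t0 mulr0 eq_sym mulf_eq0 (gt_eqF (A2 t0)) orbF.
  have y1 : y = 1 by rewrite -xy1 x0 add0r.
  by rewrite x0 y1 invr1; ring.
have u0 : u = 0.
  by apply/eqP; move/eqP: A3; rewrite mulr0 eq_sym mulf_eq0 (negbTE t_neq0).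
by rewrite u0; ring.
Qed.

Lemma big_set2_cond (R : realFieldType) (X : finType) (F : X -> R) (i j : X) :
  i != j -> \sum_(l in [set i; j] | l != j) F l = F i.
Proof.
move=> ij; rewrite (eq_bigl (pred1 i)) ?big_pred1_eq // => l /=.
by rewrite !inE; case: (eqVneq l i) => [->|_] //=; rewrite andbN.
Qed.

Section StationaryFlux.
Variables (R : realFieldType) (X : finType).
Variables (Q : {set X} -> X -> X -> R) (p : X -> {set X} -> R).

Definition net_flux (M : {set X}) (j : X) : R :=
  \sum_(i in M | i != j) (p j M * Q M j i - p i M * Q M i j).

Lemma stationary_columnE (M : {set X}) k : k \in M ->
  Q M k k = 1 - \sum_(l in M | l != k) Q M k l ->
  \sum_(l in M) p l M * ((l == k)%:R - Q M l k) = net_flux M k.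
Proof.
move=> kM Qkk; rewrite (bigD1 k) //= eqxx Qkk subKr mulr_sumr /net_flux sumrB.
congr (_ + _); rewrite -sumrN; apply: eq_bigr => l /andP[_ /negbTE lk].
by rewrite lk sub0r mulrN.
Qed.

Hypothesis QA : Q_assumptions Q.

Lemma stationary_net_flux (M : {set X}) : M != set0 ->
  stationary p Q M <-> forall j, j \in M -> net_flux M j = 0.
Proof.
have [_ [A1 _]] := QA => M0.
have colE k : k \in M ->
    \sum_(l in M) p l M * ((l == k)%:R - Q M l k) = net_flux M k.
  by move=> kM; apply: stationary_columnE => //; case: (A1 M M0 k kM).
by split=> st j jM; [rewrite -colE // st | rewrite colE // st].
Qed.

Lemma pair_detailed_balance (i j : X) : i != j -> stationary p Q [set i; j] ->
  p j [set i; j] * Q [set i; j] j i = p i [set i; j] * Q [set i; j] i j.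
Proof.
move=> ij /stationary_net_flux st.
have jP : j \in [set i; j] by rewrite !inE eqxx orbT.
have /st/(_ j jP)/eqP : [set i; j] != set0 by apply/set0Pn; exists j.
by rewrite /net_flux big_set2_cond // subr_eq0 => /eqP.
Qed.

Lemma criterion_term_flux (M : {set X}) (i j : X) :
  is_scf p -> stationary p Q [set i; j] -> M != set0 ->
  i \in M -> j \in M -> i != j ->
  (if 0 < Q M j i then delta p M j i * Q M j i / p i [set i; j] else 0)
  - (if (Q M j i == 0) && (Q [set i; j] j i == 0)
     then delta p M i j * Q M i j / p j [set i; j] else 0)
  = p j M * Q M j i - p i M * Q M i j.
Proof.
have [A0 [_ [A2 A3]]] := QA => scf st M0 iM jM ij.
set P := [set i; j]; have P0 : P != set0 by apply/set0Pn; exists i; rewrite !inE eqxx.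
have [_ [sumP _]] := scf P P0.
rewrite /delta (setUC [set j]) -/P.
apply: pair_flux_identity; first by rewrite -sumP big_setU1 ?big_set1 // inE.
- exact: pair_detailed_balance.
- exact: A3.
- by rewrite /P setUC; apply: A2; rewrite eq_sym.
- exact: A0.
Qed.

End StationaryFlux.

Theorem lemmaA3 (R : realFieldType) (X : finType)
  (Q : {set X} -> X -> X -> R) (p : X -> {set X} -> R) :
  Q_assumptions Q ->
  is_scf p ->
  (forall i j : X, i != j -> stationary p Q [set i; j]) ->
  forall M : {set X}, M != set0 ->
    (stationary p Q M <->
     forall j, j \in M ->
       \sum_(i in M | (i != j) && (0 < Q M j i))
          (delta p M j i * Q M j i / p i [set i; j])
       - \sum_(i in M | [&& i != j, Q M j i == 0 & Q [set i; j] j i == 0])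
          (delta p M i j * Q M i j / p j [set i; j]) = 0).
Proof.
move=> QA scf pair_st M M0.
have criterion_flux j : j \in M ->
    \sum_(i in M | (i != j) && (0 < Q M j i))
       (delta p M j i * Q M j i / p i [set i; j])
    - \sum_(i in M | [&& i != j, Q M j i == 0 & Q [set i; j] j i == 0])
       (delta p M i j * Q M i j / p j [set i; j]) = net_flux Q p M j.
  move=> jM; rewrite !big_mkcondr -sumrB [net_flux _ _ _ _]big_mkcondr.
  apply: eq_bigr => i iM; case: (eqVneq i j) => [->|ij]; first by rewrite /= subr0.
  by rewrite /= (criterion_term_flux QA scf (pair_st i j ij)).
rewrite stationary_net_flux //.
by split=> h j jM; [rewrite criterion_flux ?h | rewrite -criterion_flux ?h].
Qed.
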